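(* Let $m,n\geq 2$ and let $V$ be the vertex set of $K_m\Box K_n$. If $S$ is a $\{2\}$-resolving set of $K_m\Box K_n$, then (1) there is a vertex $v\in V$ such that $\{v\}\cup(V\setminus N(v))\subseteq S$, or (2) every row and every column of $K_m\Box K_n$ contains at least two elements of $S$ and every quadruple contains at least one element of $S$.
   Context: $K_m\Box K_n$ has vertices $av$ with $a\in V(K_m)$, $v\in V(K_n)$; distinct $av,bu$ are adjacent iff $a=b$ or $u=v$. A column is a set $\{au: u\in V(K_n)\}$ for fixed $a\in V(K_m)$; a row is a set $\{au: a\in V(K_m)\}$ for fixed $u\in V(K_n)$. A quadruple is a set $\{av,au,bv,bu\}$ with $a\neq b$, $u\neq v$. $N(v)$ is the set of neighbours of $v$. $d$ is the shortest-path distance, $d(s,X)=\min_{x\in X}d(s,x)$, $\mathcal{D}_S(X)=(d(s_1,X),\dots,d(s_k,X))$ for $S=\{s_1,\dots,s_k\}$. $S$ is a $\{2\}$-resolving set if $\mathcal{D}_S(X)\neq\mathcal{D}_S(Y)$ for all distinct nonempty vertex sets $X,Y$ with $|X|,|Y|\leq 2$. *)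

From mathcomp Require Import all_boot.
Set Implicit Arguments. Unset Strict Implicit. Unset Printing Implicit Defensive.

Section Graph.
Variables (T : finType) (e : rel T).

Fixpoint ball (k : nat) (x : T) : {set T} :=
  match k with
  | 0 => [set x]
  | k'.+1 => ball k' x :|: [set z | [exists w in ball k' x, e w z]]
  end.

(* shortest-path distance; (= #|T| if y is unreachable from x) *)
Definition gdist (x y : T) : nat :=
  find (fun k => y \in ball k x) (iota 0 #|T|).

Definition gdist_set (s : T) (X : {set T}) : nat :=
  \big[minn/#|T|]_(x in X) gdist s x.

Definition nbhd (v : T) : {set T} := [set w | e v w].

Definition two_resolving (S : {set T}) : Prop :=
  forall X Y : {set T}, X != set0 -> Y != set0 ->
    #|X| <= 2 -> #|Y| <= 2 -> X != Y ->
    exists2 s, s \in S & gdist_set s X != gdist_set s Y.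
End Graph.

(* The Cartesian product K_m [] K_n on 'I_m * 'I_n *)
Definition rook_adj (m n : nat) : rel ('I_m * 'I_n) :=
  fun x y => (x != y) && ((x.1 == y.1) || (x.2 == y.2)).

Definition column (m n : nat) (a : 'I_m) : {set 'I_m * 'I_n} :=
  [set x | x.1 == a].
Definition row (m n : nat) (u : 'I_n) : {set 'I_m * 'I_n} :=
  [set x | x.2 == u].
Definition quadruple (m n : nat) (a b : 'I_m) (u v : 'I_n) : {set 'I_m * 'I_n} :=
  [set (a, v); (a, u); (b, v); (b, u)].

From HB Require Import structures.
From mathcomp Require Import all_boot.
Set Implicit Arguments. Unset Strict Implicit. Unset Printing Implicit Defensive.

(* In K_m [] K_n the distance between (a,u) and (b,w) is the Hamming distance
   [a != b] + [u != w], so D_S on sets of size at most two compares minima of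
   such distances.  A vertex distinguishing {(a,w)} from {(a,w),(a,u)} lies in
   row u, so every row meets S.  A vertex distinguishing {(a,w),(b,w)} from
   {(a,w),(b,u)} is either (b,w) or lies in row u outside column a; hence if
   (a,u) is the only vertex of S in its row, S contains (a,u) and all of its
   non-neighbours.  Columns are rows of the transposed grid.  Finally, only a
   vertex of the quadruple {a,b} x {u,v} distinguishes {(a,v),(b,u)} from
   {(a,u),(b,v)}. *)

(* [minn] has no neutral element on [nat]; [bigD1] only needs a commutative semigroup. *)
HB.instance Definition _ := SemiGroup.isComLaw.Build nat minn minnA minnC.

Lemma find_iota_leq d N : d < N -> find (leq d) (iota 0 N) = d.
Proof.
move=> ltdN; rewrite -(subnKC (ltnW ltdN)) iotaD find_cat size_iota.
have -> : has (leq d) (iota 0 d) = false.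
  by apply/hasPn => i; rewrite mem_iota -ltnNge.
by rewrite -subn_gt0 in ltdN; case: (N - d) ltdN => [|k] //= _; rewrite add0n leqnn addn0.
Qed.

Section RookDistance.
Variables m n : nat.
Implicit Types x y z s : 'I_m * 'I_n.
Local Notation adj := (@rook_adj m n).

Definition rook_dist x y : nat := (x.1 != y.1) + (x.2 != y.2).

Lemma rook_dist_eq0 x y : (rook_dist x y == 0) = (x == y).
Proof.
case: x y => x1 x2 [y1 y2]; rewrite /rook_dist /= xpair_eqE.
by case: (x1 == y1); case: (x2 == y2).
Qed.

Lemma rook_adjE x y : adj x y = (rook_dist x y == 1).
Proof.
case: x y => x1 x2 [y1 y2]; rewrite /rook_adj /rook_dist /= xpair_eqE.
by case: (x1 == y1); case: (x2 == y2).
Qed.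

Lemma rook_dist_triangle x y z : rook_dist x z <= rook_dist x y + rook_dist y z.
Proof.
have neq_tri (U : eqType) (p q r : U) : (p != r) <= (p != q) + (q != r).
  by case: (eqVneq p q) => [->|]; [|case: (_ != r); case: (p != r)].
by rewrite /rook_dist addnACA; apply: leq_add; apply: neq_tri.
Qed.

Lemma rook_geodesic_step x y : 0 < rook_dist x y ->
  exists2 w, rook_dist x w = (rook_dist x y).-1 & adj w y.
Proof.
case: x y => x1 x2 [y1 y2]; rewrite /rook_dist /=.
have [<-|ne2] := eqVneq x2 y2; last first.
  by exists (y1, x2); rewrite ?rook_adjE /rook_dist /= ?eqxx ?ne2 ?addn0 ?addn1.
rewrite addn0 => ne1.
by exists (x1, x2); rewrite ?rook_adjE /rook_dist /= !eqxx; case: (x1 != y1) ne1.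
Qed.

Lemma mem_ball_rook k x y : (y \in ball adj k x) = (rook_dist x y <= k).
Proof.
elim: k y => [|k IH] y /=.
  by rewrite inE leqn0 rook_dist_eq0 eq_sym.
rewrite !inE IH; apply/idP/idP => [/orP[/leqW //|/existsP[w /andP[]]]|].
  rewrite IH rook_adjE => le_xw /eqP dwy.
  by apply: leq_trans (rook_dist_triangle x w y) _; rewrite dwy addn1.
rewrite leq_eqVlt ltnS => /orP[/eqP dxy|-> //].
have [|w dxw adj_wy] := @rook_geodesic_step x y; first by rewrite dxy.
by apply/orP; right; apply/existsP; exists w; rewrite IH dxw dxy leqnn.
Qed.

Lemma rook_dist_lt_card x y : rook_dist x y < #|{: 'I_m * 'I_n}|.
Proof.
have le_ord k (i j : 'I_k) : (i != j) < k.
  by rewrite -cards2 (leq_trans (max_card _)) ?card_ord.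
rewrite card_prod !card_ord.
apply: leq_trans (leq_mul (le_ord _ x.1 y.1) (le_ord _ x.2 y.2)).
by rewrite /rook_dist; case: (x.1 != y.1); case: (x.2 != y.2).
Qed.

Lemma gdist_rook x y : gdist adj x y = rook_dist x y.
Proof.
rewrite /gdist (eq_find (a2 := leq (rook_dist x y))) => [|k]; last exact: mem_ball_rook.
exact/find_iota_leq/rook_dist_lt_card.
Qed.

Lemma gdist_set_rook2 s p q :
  gdist_set adj s [set p; q] = minn (rook_dist s p) (rook_dist s q).
Proof.
have dist_min r : minn (rook_dist s r) #|{: 'I_m * 'I_n}| = rook_dist s r.
  exact/minn_idPl/ltnW/rook_dist_lt_card.
rewrite /gdist_set; have [<-|ne_pq] := eqVneq p q.
  by rewrite setUid big_set1E gdist_rook dist_min minnn.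
rewrite (bigD1 p) ?setU11 //= (eq_bigl [in [set q]]) ?big_set1E ?gdist_rook ?dist_min //.
by move=> i; rewrite !inE; case: (eqVneq i p) => [->|]; rewrite ?andbT ?(negPf ne_pq).
Qed.

Definition pair_resolving (S : {set 'I_m * 'I_n}) := forall p q p' q',
  [set p; q] != [set p'; q'] ->
  exists2 s, s \in S &
    minn (rook_dist s p) (rook_dist s q) != minn (rook_dist s p') (rook_dist s q').

Lemma two_resolving_pair S : two_resolving adj S -> pair_resolving S.
Proof.
move=> resS p q p' q' ne.
have set2_neq0 x y : [set x; y] != set0 by apply/set0Pn; exists x; rewrite !inE eqxx.
have card_set2 x y : #|[set x; y]| <= 2 by rewrite cards2; case: (_ != _).
have [s Ss] := resS _ _ (set2_neq0 p q) (set2_neq0 p' q') (card_set2 p q) (card_set2 p' q') ne.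
by rewrite !gdist_set_rook2; exists s.
Qed.

End RookDistance.

Section PairResolving.
Variables (m n : nat) (S : {set 'I_m * 'I_n}).
Hypothesis resS : pair_resolving S.

Lemma row_meets (a : 'I_m) (u w : 'I_n) : u != w -> row m u :&: S != set0.
Proof.
move=> ne_uw; have [|[b t] Sbt] := @resS (a, w) (a, w) (a, w) (a, u).
  apply/eqP => /setP /(_ (a, u)).
  by rewrite !inE !xpair_eqE !eqxx (negPf ne_uw) !andbF.
rewrite minnn /rook_dist /= => sep; apply/set0Pn; exists (b, t); rewrite !inE Sbt andbT /=.
by move: sep; case: (t == u); case: (t == w); case: (b == a).
Qed.

Lemma row_corner_sep (a b : 'I_m) (u w : 'I_n) : a != b -> u != w ->
  exists2 s, s \in S & (s == (b, w)) || (s.2 == u) && (s.1 != a).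
Proof.
move=> ne_ab ne_uw; have [|[c t] Sct sep] := @resS (a, w) (b, w) (a, w) (b, u).
  apply/eqP => /setP /(_ (b, u)).
  by rewrite !inE !xpair_eqE !eqxx (negPf ne_uw) !andbF.
exists (c, t); rewrite // xpair_eqE /=; move: sep; rewrite /rook_dist /=.
have [->|ne_ca] := eqVneq c a; first by rewrite ne_ab; case: (t != w); case: (t != u).
have [->|ne_tw] := eqVneq t w; first by rewrite [w == u]eq_sym (negPf ne_uw); case: (c == b).
by case: (t == u); case: (c == b).
Qed.

Lemma row_singleton_sub (v : 'I_m * 'I_n) :
  row m v.2 :&: S = [set v] -> [set v] :|: ~: nbhd (@rook_adj m n) v \subset S.
Proof.
case: v => a u /= rowS; apply/subsetP => -[b w]; rewrite !inE.
have [-> _|ne_bw] := eqVneq (b, w) (a, u).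
  by have := set11 (a, u); rewrite -rowS => /setIP[].
rewrite /rook_adj eq_sym ne_bw /= negb_or => /andP[ne_ab ne_uw].
have [s Ss /orP[/eqP <- //|/andP[s_u ne_sa]]] := row_corner_sep ne_ab ne_uw.
have : s \in row m u :&: S by rewrite !inE s_u.
by rewrite rowS inE => /eqP s_v; rewrite s_v eqxx in ne_sa.
Qed.

Lemma row_card_le1 (u : 'I_n) : 0 < m -> 1 < n -> #|row m u :&: S| <= 1 ->
  exists v, [set v] :|: ~: nbhd (@rook_adj m n) v \subset S.
Proof.
move=> m_gt0 n_gt1 card_le1.
have /card_gt0P[w] : 0 < #|[set~ u]| by rewrite cardsC1 card_ord -subn1 subn_gt0.
rewrite !inE eq_sym => ne_uw.
have := row_meets (Ordinal m_gt0) ne_uw; rewrite -card_gt0 => card_gt0.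
have /cards1P[v rowS] : #|row m u :&: S| == 1 by rewrite eqn_leq card_le1.
have : v \in row m u by have := set11 v; rewrite -rowS => /setIP[].
by rewrite inE => /eqP v_u; exists v; apply: row_singleton_sub; rewrite v_u.
Qed.

Lemma quadruple_meets (a b : 'I_m) (u v : 'I_n) : a != b -> u != v ->
  quadruple a b u v :&: S != set0.
Proof.
move=> ne_ab ne_uv; have [|[c t] Sct] := @resS (a, v) (b, u) (a, u) (b, v).
  apply/eqP => /setP /(_ (a, u)).
  by rewrite !inE !xpair_eqE !eqxx (negPf ne_ab) (negPf ne_uv) !andbF.
rewrite /rook_dist /= => sep; apply/set0Pn; exists (c, t); rewrite !inE Sct andbT !xpair_eqE.
move: sep; have [eq_ca|ne_ca] := eqVneq c a.
  by subst c; rewrite (negPf ne_ab); case: (t == u); case: (t == v).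
by have [eq_cb|ne_cb] := eqVneq c b; [subst c|]; case: (t == u); case: (t == v).
Qed.

End PairResolving.

Section Transpose.
Variables m n : nat.
Implicit Types (x : 'I_m * 'I_n) (y : 'I_n * 'I_m).

Lemma rook_dist_swap x y : rook_dist (swap_pair x) y = rook_dist x (swap_pair y).
Proof. exact: addnC. Qed.

Lemma rook_adj_swap x y : rook_adj (swap_pair x) y = rook_adj x (swap_pair y).
Proof. by rewrite !rook_adjE rook_dist_swap. Qed.

Lemma pair_resolving_swap (S : {set 'I_m * 'I_n}) :
  pair_resolving S -> pair_resolving (swap_pair @^-1: S).
Proof.
move=> resS p q p' q' ne.
have [|s Ss sep] := @resS (swap_pair p) (swap_pair q) (swap_pair p') (swap_pair q').
  apply: contra ne => /eqP /setP eq_swap; apply/eqP/setP => y.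
  by have := eq_swap (swap_pair y); rewrite !inE !(can_eq swap_pairK).
by exists (swap_pair s); rewrite ?inE ?swap_pairK // !rook_dist_swap.
Qed.

Lemma card_row_swap (S : {set 'I_m * 'I_n}) (a : 'I_m) :
  #|row n a :&: swap_pair @^-1: S| = #|column n a :&: S|.
Proof.
have -> : row n a :&: swap_pair @^-1: S = swap_pair @^-1: (column n a :&: S).
  by apply/setP => y; rewrite !inE.
by apply: on_card_preimset; exists swap_pair => ? _; exact: swap_pairK.
Qed.

End Transpose.

Lemma column_card_le1 (m n : nat) (S : {set 'I_m * 'I_n}) (a : 'I_m) :
  pair_resolving S -> 1 < m -> 0 < n -> #|column n a :&: S| <= 1 ->
  exists v, [set v] :|: ~: nbhd (@rook_adj m n) v \subset S.
Proof.
move=> resS m_gt1 n_gt0; rewrite -card_row_swap.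
case/(row_card_le1 (pair_resolving_swap resS) n_gt0 m_gt1) => v sub_v.
exists (swap_pair v); apply/subsetP => x x_v; move/subsetP: sub_v => /(_ (swap_pair x)).
rewrite !inE swap_pairK; apply; move: x_v; rewrite !inE rook_adj_swap.
by rewrite -[x == _](can_eq swap_pairK) swap_pairK.
Qed.

Theorem mainTheorem11 (m n : nat) (S : {set 'I_m * 'I_n}) :
  2 <= m -> 2 <= n ->
  two_resolving (@rook_adj m n) S ->
  (exists v : 'I_m * 'I_n,
      [set v] :|: ~: nbhd (@rook_adj m n) v \subset S)
  \/
  ((forall u : 'I_n, 2 <= #|row m u :&: S|) /\
   (forall a : 'I_m, 2 <= #|column n a :&: S|) /\
   (forall (a b : 'I_m) (u v : 'I_n), a != b -> u != v ->
      quadruple a b u v :&: S != set0)).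
Proof.
move=> m_gt1 n_gt1 /two_resolving_pair resS.
have [rows2|/forallPn[u]] := boolP [forall u, 1 < #|row m u :&: S|]; last first.
  by rewrite -leqNgt => /(row_card_le1 resS (ltnW m_gt1) n_gt1); left.
have [cols2|/forallPn[a]] := boolP [forall a, 1 < #|column n a :&: S|]; last first.
  by rewrite -leqNgt => /(column_card_le1 resS m_gt1 (ltnW n_gt1)); left.
by right; split; [|split]; [apply/forallP | apply/forallP | apply: quadruple_meets].
Qed.
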